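(* In the simplified FaRMv2 protocol described in the context, every transaction $T$ (committed or aborted) works on a consistent snapshot of object values taken at its read timestamp $rts$: for every object that $T$ successfully reads, the version it reads is the latest version of that object ever written with timestamp at most $rts$, and the global time $rts$ occurs during the execution of $T$ (between its start and the completion of its read-timestamp acquisition).
   Context: Global time means the time at a distinguished clock master. Each machine has a local clock whose rate differs from that of global time by a relative factor of at most a known drift bound $\epsilon$. The function TIME() returns an interval $[L,U]$ such that the global time at the moment of the call lies in $[L,U]$. The function GET\_TS is: $[L,U] \gets \mathrm{TIME}()$; sleep for $(U-L)(1+\epsilon)$ units of local time; return $U$. The data consists of objects, each having a lock bit and a set of versions, each version tagged with a timestamp (the write timestamp of the transaction that wrote it). ReadAtTs$(R,ts)$: if $R$ is locked return NULL; otherwise return the version of $R$ with the highest timestamp $\le ts$, or NULL if none is available. LockAtTs$(R,ts)$: if $R$ is locked or $R$ has timestamp $\ge ts$ return NULL; otherwise lock $R$. A transaction with read set RSet and write set WSet executes ExecuteAndCommit(RSet, WSet): $rts \gets$ GET\_TS; for each $R\in$ RSet, if ReadAtTs$(R,rts)$ returns NULL then abort; if WSet is empty, commit (read-only transaction); otherwise for each $W\in$ WSet, if LockAtTs$(W,rts)$ returns NULL then abort; then $wts \gets$ GET\_TS (performed while holding the locks); then for each $R \in$ RSet $\setminus$ WSet, if $R$ is locked or $R$ has timestamp $> rts$, abort (validation failure); then install for each object in WSet a new version with timestamp $wts$, unlock all objects, and commit. Here $rts$ is the transaction's read timestamp and $wts$ its write timestamp. *)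

From Stdlib Require Import Reals Lra List.
Import ListNotations.
Open Scope R_scope.

Definition Obj := nat.
Definition TxId := nat.
Definition Machine := nat.

Record version := Ver { vts : R; vwriter : TxId }.

(* Static description of the system:
   - eps : drift bound
   - clk m : global time -> local time of machine m
   - mach T : machine executing transaction T
   - rset T, wset T : read and write sets of transaction T *)
Record system := mkSystem {
  eps : R;
  clk : Machine -> R -> R;
  mach : TxId -> Machine;
  rset : TxId -> list Obj;
  wset : TxId -> list Obj }.

Definition drift_bounded (S : system) : Prop :=
  0 <= eps S /\
  forall m t1 t2, t1 <= t2 ->
    (1 - eps S) * (t2 - t1) <= clk S m t2 - clk S m t1 <= (1 + eps S) * (t2 - t1).

Inductive phase :=
| Idle
| SleepR (L U g : R)            (* GET_TS for rts: TIME() called at global time g returned [L,U]; sleeping *)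
| Reading (rts : R) (todo : list Obj)
| Locking (rts : R) (todo held : list Obj)
| SleepW (rts : R) (held : list Obj) (L U g : R)     (* GET_TS for wts, holding locks *)
| Validating (rts wts : R) (todo held : list Obj)
| Installing (wts : R) (todo held : list Obj)
| Releasing (commit : bool) (held : list Obj)
| Done (commit : bool).

Record state := mkState {
  locked : Obj -> bool;
  vers : Obj -> list version;
  ph : TxId -> phase }.

Definition initial_state (init : Obj -> list version) : state :=
  mkState (fun _ => false) init (fun _ => Idle).

Inductive event :=
| ETime (T : TxId) (L U : R)                (* call to TIME() returning [L,U] *)
| EWake (T : TxId)                          (* end of the sleep of GET_TS *)
| ERead (T : TxId) (o : Obj) (rts : R) (res : option version)
| ELock (T : TxId) (o : Obj) (ok : bool)
| EValidate (T : TxId) (o : Obj) (ok : bool)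
| EInstall (T : TxId) (o : Obj)
| EUnlock (T : TxId) (o : Obj)
| ETau (T : TxId).

Definition ev_tx (e : event) : TxId :=
  match e with
  | ETime T _ _ | EWake T | ERead T _ _ _ | ELock T _ _ | EValidate T _ _
  | EInstall T _ | EUnlock T _ | ETau T => T
  end.

Definition set_ph (s : state) (T : TxId) (p : phase) : state :=
  mkState (locked s) (vers s) (fun T' => if Nat.eqb T' T then p else ph s T').

Definition set_lock (s : state) (o : Obj) (b : bool) : state :=
  mkState (fun o' => if Nat.eqb o' o then b else locked s o') (vers s) (ph s).

Definition add_version (s : state) (o : Obj) (v : version) : state :=
  mkState (locked s) (fun o' => if Nat.eqb o' o then v :: vers s o else vers s o') (ph s).

Definition validation_set (S : system) (T : TxId) : list Obj :=
  filter (fun r => negb (existsb (Nat.eqb r) (wset S T))) (rset S T).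

Inductive step (S : system) : state -> R -> event -> state -> Prop :=
| st_time_r : forall s t T L U,
    ph s T = Idle -> L <= t <= U ->
    step S s t (ETime T L U) (set_ph s T (SleepR L U t))
| st_wake_r : forall s t T L U g,
    ph s T = SleepR L U g ->
    clk S (mach S T) t - clk S (mach S T) g >= (U - L) * (1 + eps S) ->
    step S s t (EWake T) (set_ph s T (Reading U (rset S T)))
| st_read_ok : forall s t T rts o todo v,
    ph s T = Reading rts (o :: todo) ->
    locked s o = false ->
    In v (vers s o) -> vts v <= rts ->
    (forall v', In v' (vers s o) -> vts v' <= rts -> vts v' <= vts v) ->
    step S s t (ERead T o rts (Some v)) (set_ph s T (Reading rts todo))
| st_read_fail : forall s t T rts o todo,
    ph s T = Reading rts (o :: todo) ->
    (locked s o = true \/ forall v, In v (vers s o) -> rts < vts v) ->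
    step S s t (ERead T o rts None) (set_ph s T (Done false))
| st_ro_commit : forall s t T rts,
    ph s T = Reading rts [] -> wset S T = [] ->
    step S s t (ETau T) (set_ph s T (Done true))
| st_to_lock : forall s t T rts,
    ph s T = Reading rts [] -> wset S T <> [] ->
    step S s t (ETau T) (set_ph s T (Locking rts (wset S T) []))
| st_lock_ok : forall s t T rts o todo held,
    ph s T = Locking rts (o :: todo) held ->
    locked s o = false ->
    (forall v, In v (vers s o) -> vts v < rts) ->
    step S s t (ELock T o true)
      (set_ph (set_lock s o true) T (Locking rts todo (o :: held)))
| st_lock_fail : forall s t T rts o todo held,
    ph s T = Locking rts (o :: todo) held ->
    (locked s o = true \/ exists v, In v (vers s o) /\ rts <= vts v) ->
    step S s t (ELock T o false) (set_ph s T (Releasing false held))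
| st_time_w : forall s t T rts held L U,
    ph s T = Locking rts [] held -> L <= t <= U ->
    step S s t (ETime T L U) (set_ph s T (SleepW rts held L U t))
| st_wake_w : forall s t T rts held L U g,
    ph s T = SleepW rts held L U g ->
    clk S (mach S T) t - clk S (mach S T) g >= (U - L) * (1 + eps S) ->
    step S s t (EWake T) (set_ph s T (Validating rts U (validation_set S T) held))
| st_val_ok : forall s t T rts wts o todo held,
    ph s T = Validating rts wts (o :: todo) held ->
    locked s o = false ->
    (forall v, In v (vers s o) -> vts v <= rts) ->
    step S s t (EValidate T o true) (set_ph s T (Validating rts wts todo held))
| st_val_fail : forall s t T rts wts o todo held,
    ph s T = Validating rts wts (o :: todo) held ->
    (locked s o = true \/ exists v, In v (vers s o) /\ rts < vts v) ->
    step S s t (EValidate T o false) (set_ph s T (Releasing false held))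
| st_val_done : forall s t T rts wts held,
    ph s T = Validating rts wts [] held ->
    step S s t (ETau T) (set_ph s T (Installing wts (wset S T) held))
| st_install : forall s t T wts o todo held,
    ph s T = Installing wts (o :: todo) held ->
    step S s t (EInstall T o)
      (set_ph (add_version s o (Ver wts T)) T (Installing wts todo held))
| st_inst_done : forall s t T wts held,
    ph s T = Installing wts [] held ->
    step S s t (ETau T) (set_ph s T (Releasing true held))
| st_release : forall s t T c o held,
    ph s T = Releasing c (o :: held) ->
    step S s t (EUnlock T o) (set_ph (set_lock s o false) T (Releasing c held))
| st_rel_done : forall s t T c,
    ph s T = Releasing c [] ->
    step S s t (ETau T) (set_ph s T (Done c)).

(* A finite execution from state s: a list of (global time, event, resulting
   state), with strictly increasing global times; [last] is the time of the
   previous step, if any. *)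
Fixpoint exec (S : system) (s : state) (last : option R)
    (tr : list (R * event * state)) : Prop :=
  match tr with
  | [] => True
  | (t, e, s') :: tr' =>
      match last with None => True | Some l => l < t end /\
      step S s t e s' /\ exec S s' (Some t) tr'
  end.

Definition ever_version (s0 : state) (tr : list (R * event * state))
    (o : Obj) (v : version) : Prop :=
  In v (vers s0 o) \/
  exists i t e s, nth_error tr i = Some (t, e, s) /\ In v (vers s o).

(* Window: GET_TS sleeps (U - L)(1 + eps) units of local time, which by the drift
   bound is at least U - L units of global time; since TIME() was called at a global
   time g >= L, the sleep ends at or after U = rts.  A history invariant indexed by
   the control phase records the TIME and wake events of each transaction.

   Snapshot: when T reads o, o is unlocked, so no writer of o has finished its lock
   phase.  Any writer that locks o later calls TIME() for its write timestamp after
   the read, so its wts exceeds the read time, which exceeds rts by the window.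
   Versions only accumulate, so those existing before the read were seen by it. *)

From Stdlib Require Import Reals Lra Lia List.
Import ListNotations.
Open Scope R_scope.

Lemma nth_error_skipn_lt {A : Type} (xs : list A) m n x :
  (m < n)%nat -> nth_error xs n = Some x ->
  nth_error (skipn (S m) xs) (n - S m) = Some x.
Proof.
  intros Hmn Hn. rewrite nth_error_skipn.
  now replace (S m + (n - S m))%nat with n by lia.
Qed.

Section Execution.

Variable sys : system.

Lemma exec_time_lt s l tr m t e s' :
  exec sys s (Some l) tr -> nth_error tr m = Some (t, e, s') -> l < t.
Proof.
  revert s l m. induction tr as [|[[t0 e0] s0] tr IH]; intros s l m Hex Hm.
  - destruct m; discriminate.
  - destruct Hex as [Hl [_ Hex]]. destruct m as [|m]; simpl in Hm.
    + injection Hm as <- _ _. exact Hl.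
    + specialize (IH _ _ _ Hex Hm). lra.
Qed.

Lemma exec_skipn s l tr i t e s' :
  exec sys s l tr -> nth_error tr i = Some (t, e, s') ->
  exec sys s' (Some t) (skipn (S i) tr).
Proof.
  revert s l i. induction tr as [|[[t0 e0] s0] tr IH]; intros s l i Hex Hi.
  - destruct i; discriminate.
  - destruct Hex as [_ [_ Hex]]. destruct i as [|i]; simpl in Hi.
    + injection Hi as <- <- <-. exact Hex.
    + exact (IH _ _ _ Hex Hi).
Qed.

Lemma exec_time_increasing s0 l tr j n tj ej sj tn en sn :
  exec sys s0 l tr -> (j < n)%nat ->
  nth_error tr j = Some (tj, ej, sj) -> nth_error tr n = Some (tn, en, sn) -> tj < tn.
Proof.
  intros Hex Hjn Hj Hn.
  exact (exec_time_lt _ _ _ _ _ _ _ (exec_skipn _ _ _ _ _ _ _ Hex Hj)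
           (nth_error_skipn_lt _ _ _ _ Hjn Hn)).
Qed.

(* [P i] is about the state reached after the first [i] steps. *)
Lemma exec_nth_ind (P : nat -> state -> Prop) tr : forall s0 l,
  exec sys s0 l tr -> P 0%nat s0 ->
  (forall i sb t e s, nth_error tr i = Some (t, e, s) ->
     P i sb -> step sys sb t e s -> P (S i) s) ->
  forall i t e s, nth_error tr i = Some (t, e, s) ->
  exists sb, P i sb /\ step sys sb t e s /\ P (S i) s.
Proof.
  revert P. induction tr as [|[[t0 e0] s1] tr IH]; intros P s0 l Hex H0 Hstep i t e s Hi.
  - destruct i; discriminate.
  - destruct Hex as [_ [Hst Hex]].
    assert (H1 : P 1%nat s1) by exact (Hstep 0%nat s0 t0 e0 s1 eq_refl H0 Hst).
    destruct i as [|i]; simpl in Hi.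
    + injection Hi as <- <- <-. exists s0. auto.
    + exact (IH (fun n => P (S n)) s1 (Some t0) Hex H1 (fun n => Hstep (S n)) i t e s Hi).
Qed.

Lemma step_vers_incl s t e s' o : step sys s t e s' -> incl (vers s o) (vers s' o).
Proof.
  intros Hst. destruct Hst; simpl; try apply incl_refl.
  destruct (Nat.eqb_spec o o0) as [->|]; [apply incl_tl|]; apply incl_refl.
Qed.

Lemma exec_vers_incl s0 l tr i t e s o :
  exec sys s0 l tr -> nth_error tr i = Some (t, e, s) -> incl (vers s0 o) (vers s o).
Proof.
  intros Hex Hi.
  assert (Hstep : forall n sb t' e' s', nth_error tr n = Some (t', e', s') ->
            incl (vers s0 o) (vers sb o) -> step sys sb t' e' s' ->
            incl (vers s0 o) (vers s' o))
    by (intros n sb t' e' s' _ Hsb Hst; exact (incl_tran Hsb (step_vers_incl _ _ _ _ o Hst))).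
  destruct (exec_nth_ind _ tr s0 l Hex (incl_refl _) Hstep i t e s Hi) as (_ & _ & _ & Hs).
  exact Hs.
Qed.

Lemma exec_vers_incl_nth s0 l tr m n tm em sm tn en sn o :
  exec sys s0 l tr -> (m <= n)%nat ->
  nth_error tr m = Some (tm, em, sm) -> nth_error tr n = Some (tn, en, sn) ->
  incl (vers sm o) (vers sn o).
Proof.
  intros Hex Hmn Hm Hn. destruct (Nat.eq_dec m n) as [<-|Hne].
  - rewrite Hm in Hn. injection Hn as _ _ <-. apply incl_refl.
  - assert (Hlt : (m < n)%nat) by lia.
    exact (exec_vers_incl _ _ _ _ _ _ _ o (exec_skipn _ _ _ _ _ _ _ Hex Hm)
             (nth_error_skipn_lt _ _ _ _ Hlt Hn)).
Qed.

Definition held (p : phase) : list Obj :=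
  match p with
  | Locking _ _ h | SleepW _ h _ _ _ | Validating _ _ _ h | Installing _ _ h
  | Releasing _ h => h
  | _ => []
  end.

Definition covers_wset (W : TxId) (p : phase) : Prop :=
  match p with
  | Locking _ todo h => forall o, In o (wset sys W) -> In o todo \/ In o h
  | SleepW _ h _ _ _ | Validating _ _ _ h => forall o, In o (wset sys W) -> In o h
  | Installing _ todo h =>
      (forall o, In o (wset sys W) -> In o h) /\ (forall o, In o todo -> In o (wset sys W))
  | _ => True
  end.

Record lock_inv (s : state) : Prop := {
  held_nodup : forall W, NoDup (held (ph s W));
  held_locked : forall W o, In o (held (ph s W)) -> locked s o = true;
  held_exclusive : forall W W' o, W <> W' ->
    In o (held (ph s W)) -> In o (held (ph s W')) -> False;
  held_covers : forall W, covers_wset W (ph s W) }.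

Lemma lock_inv_initial init : lock_inv (initial_state init).
Proof. split; simpl; auto using NoDup_nil. Qed.

Lemma lock_inv_set_ph s T p :
  lock_inv s -> held p = held (ph s T) -> covers_wset T p -> lock_inv (set_ph s T p).
Proof.
  intros [Hnd Hlk Hex Hcov] Hh Hc.
  assert (Hheld : forall W, held (ph (set_ph s T p) W) = held (ph s W)).
  { intros W; simpl. destruct (Nat.eqb_spec W T) as [->|]; auto. }
  split; intros W.
  - rewrite Hheld. apply Hnd.
  - intros o. rewrite Hheld. apply Hlk.
  - intros W' o. rewrite !Hheld. apply Hex.
  - simpl. destruct (Nat.eqb_spec W T) as [->|]; auto.
Qed.

Lemma lock_inv_lock s T rts o todo hs :
  lock_inv s -> ph s T = Locking rts (o :: todo) hs -> locked s o = false ->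
  lock_inv (set_ph (set_lock s o true) T (Locking rts todo (o :: hs))).
Proof.
  intros [Hnd Hlk Hex Hcov] Hp Ho.
  assert (Hfree : forall W, ~ In o (held (ph s W))).
  { intros W Hin. rewrite (Hlk W o Hin) in Ho. discriminate. }
  assert (Hheld : forall W,
            held (ph (set_ph (set_lock s o true) T (Locking rts todo (o :: hs))) W)
            = if Nat.eqb W T then o :: hs else held (ph s W)).
  { intros W; simpl. destruct (Nat.eqb_spec W T) as [->|]; reflexivity. }
  split; intros W; rewrite ?Hheld.
  - destruct (Nat.eqb_spec W T) as [->|]; auto.
    specialize (Hnd T); specialize (Hfree T); rewrite Hp in Hnd, Hfree. now constructor.
  - intros o' Ho'. simpl. destruct (Nat.eqb_spec o' o); auto.
    destruct (Nat.eqb_spec W T) as [->|]; [|exact (Hlk W o' Ho')].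
    destruct Ho' as [<-|Ho']; [congruence|]. apply (Hlk T). now rewrite Hp.
  - intros W' o' HW. rewrite Hheld.
    destruct (Nat.eqb_spec W T) as [->|]; destruct (Nat.eqb_spec W' T) as [->|];
      try congruence.
    + intros [<-|Ho'] Ho''; [exact (Hfree W' Ho'')|].
      apply (Hex T W' o' HW); [now rewrite Hp | exact Ho''].
    + intros Ho' [<-|Ho'']; [exact (Hfree W Ho')|].
      apply (Hex W T o' HW Ho'). now rewrite Hp.
    + apply Hex; assumption.
  - specialize (Hcov W). simpl. destruct (Nat.eqb_spec W T) as [->|]; auto.
    rewrite Hp in Hcov. simpl in *. firstorder.
Qed.

Lemma lock_inv_release s T c o hs :
  lock_inv s -> ph s T = Releasing c (o :: hs) ->
  lock_inv (set_ph (set_lock s o false) T (Releasing c hs)).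
Proof.
  intros [Hnd Hlk Hex Hcov] Hp.
  assert (Hheld : forall W, held (ph (set_ph (set_lock s o false) T (Releasing c hs)) W)
                  = if Nat.eqb W T then hs else held (ph s W)).
  { intros W; simpl. destruct (Nat.eqb_spec W T); reflexivity. }
  assert (HT : NoDup (o :: hs)) by (specialize (Hnd T); now rewrite Hp in Hnd).
  inversion HT as [|? ? Hohs Hnd_hs]; subst.
  assert (Hother : forall W o', W <> T -> In o' (held (ph s W)) -> In o' (o :: hs) -> False).
  { intros W o' HW Ho'. change (o :: hs) with (held (Releasing c (o :: hs))).
    rewrite <- Hp. exact (Hex W T o' HW Ho'). }
  split; intros W; rewrite ?Hheld.
  - destruct (Nat.eqb_spec W T); auto.
  - intros o' Ho'. simpl. destruct (Nat.eqb_spec o' o) as [->|].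
    + destruct (Nat.eqb_spec W T) as [HWT|HW]; [subst W; contradiction|].
      exfalso. exact (Hother W o HW Ho' (or_introl eq_refl)).
    + destruct (Nat.eqb_spec W T) as [->|]; [|exact (Hlk W o' Ho')].
      apply (Hlk T). rewrite Hp. now right.
  - intros W' o' HW. rewrite Hheld.
    destruct (Nat.eqb_spec W T) as [->|]; destruct (Nat.eqb_spec W' T) as [->|];
      try congruence.
    + intros Ho' Ho''. exact (Hother W' o' (not_eq_sym HW) Ho'' (or_intror Ho')).
    + intros Ho' Ho''. exact (Hother W o' HW Ho' (or_intror Ho'')).
    + apply Hex; assumption.
  - simpl. destruct (Nat.eqb_spec W T); [exact I | apply Hcov].
Qed.

Lemma lock_inv_add_version s o v : lock_inv s -> lock_inv (add_version s o v).
Proof. intros []; split; assumption. Qed.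

Lemma lock_inv_step s t e s' : lock_inv s -> step sys s t e s' -> lock_inv s'.
Proof.
  intros Hinv Hst.
  destruct Hst;
    try solve [ eapply lock_inv_lock; eassumption | eapply lock_inv_release; eassumption ].
  all: apply lock_inv_set_ph; [try apply lock_inv_add_version; exact Hinv | |].
  all: match goal with Hp : ph _ ?W = _ |- _ =>
         pose proof (held_covers _ Hinv W) as Hc; simpl; rewrite Hp in * end.
  all: simpl in *; firstorder.
Qed.

(* In [SleepW] the pending write timestamp is the upper bound [U] returned by TIME(). *)
Definition future_wts_above (o : Obj) (r : R) (W : TxId) (p : phase) : Prop :=
  match p with
  | SleepW _ _ _ U _ => In o (wset sys W) -> r < U
  | Validating _ wts _ _ | Installing wts _ _ => In o (wset sys W) -> r < wts
  | _ => True
  end.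

Record snapshot_inv (o : Obj) (r : R) (v : version) (s : state) : Prop := {
  snapshot_max : forall v', In v' (vers s o) -> vts v' <= r -> vts v' <= vts v;
  snapshot_future : forall W, future_wts_above o r W (ph s W) }.

Lemma future_wts_above_unlocked s o r W :
  lock_inv s -> locked s o = false -> future_wts_above o r W (ph s W).
Proof.
  intros Hinv Ho.
  pose proof (held_locked _ Hinv W o) as Hlk. pose proof (held_covers _ Hinv W) as Hc.
  destruct (ph s W); simpl in *; auto; intros Hw; exfalso.
  all: rewrite Hlk in Ho; [discriminate | firstorder].
Qed.

Lemma snapshot_inv_set_ph o r v s T p :
  snapshot_inv o r v s -> future_wts_above o r T p -> snapshot_inv o r v (set_ph s T p).
Proof.
  intros [Hmax Hfut] Hp. split; [exact Hmax|].
  intros W; simpl. destruct (Nat.eqb_spec W T) as [->|]; auto.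
Qed.

Lemma snapshot_inv_install o r v s T wts o' todo hs :
  lock_inv s -> snapshot_inv o r v s -> ph s T = Installing wts (o' :: todo) hs ->
  snapshot_inv o r v (add_version s o' (Ver wts T)).
Proof.
  intros Hinv [Hmax Hfut] Hp. split; [|exact Hfut].
  intros v' Hin Hle. simpl in Hin.
  destruct (Nat.eqb_spec o o') as [->|]; [|exact (Hmax v' Hin Hle)].
  destruct Hin as [<-|Hin]; [|exact (Hmax v' Hin Hle)].
  pose proof (Hfut T) as Hf. pose proof (held_covers _ Hinv T) as Hc.
  rewrite Hp in Hf, Hc. destruct Hc as [_ Hc].
  specialize (Hf (Hc o' (or_introl eq_refl))). simpl in Hle. lra.
Qed.

Lemma snapshot_inv_step o r v s t e s' :
  lock_inv s -> snapshot_inv o r v s -> r < t -> step sys s t e s' -> snapshot_inv o r v s'.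
Proof.
  intros Hinv Hsnap Hrt Hst.
  destruct Hst; apply snapshot_inv_set_ph; simpl; auto;
    try solve [ exact Hsnap | destruct Hsnap; split; assumption | intros _; lra
              | eapply snapshot_inv_install; eassumption ].
  all: match goal with Hp : ph _ ?W = _ |- _ =>
    pose proof (snapshot_future _ _ _ _ Hsnap W) as Hf; rewrite Hp in Hf; exact Hf end.
Qed.

Lemma exec_snapshot_inv o r v s l tr m tm em sm :
  lock_inv s -> snapshot_inv o r v s -> r <= l -> exec sys s (Some l) tr ->
  nth_error tr m = Some (tm, em, sm) -> snapshot_inv o r v sm.
Proof.
  intros Hinv Hsnap Hrl Hex Hm.
  assert (Hstep : forall n sb t e s', nth_error tr n = Some (t, e, s') ->
            lock_inv sb /\ snapshot_inv o r v sb -> step sys sb t e s' ->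
            lock_inv s' /\ snapshot_inv o r v s').
  { intros n sb t e s' Hn [Hl Hs] Hst.
    pose proof (exec_time_lt _ _ _ _ _ _ _ Hex Hn).
    split; [exact (lock_inv_step _ _ _ _ Hl Hst) |].
    apply (snapshot_inv_step o r v sb t e s' Hl Hs); [lra | exact Hst]. }
  destruct (exec_nth_ind (fun _ s => lock_inv s /\ snapshot_inv o r v s) _ _ _ Hex
              (conj Hinv Hsnap) Hstep _ _ _ _ Hm) as (_ & _ & _ & _ & Hsm).
  exact Hsm.
Qed.

Definition silent (tr : list (R * event * state)) (T : TxId) (P : nat -> Prop) : Prop :=
  forall m t e s, P m -> nth_error tr m = Some (t, e, s) -> ev_tx e <> T.

Lemma silent_cover tr T P1 P2 P :
  silent tr T P1 -> silent tr T P2 -> (forall m, P m -> P1 m \/ P2 m) -> silent tr T P.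
Proof. intros H1 H2 HP m t e s Hm. destruct (HP m Hm); [apply H1 | apply H2]; assumption. Qed.

Lemma silent_at tr T n t e s :
  nth_error tr n = Some (t, e, s) -> ev_tx e <> T -> silent tr T (fun m => m = n).
Proof. intros Hn He m t' e' s' -> Hm. rewrite Hn in Hm. now injection Hm as _ <- _. Qed.

Definition rts_window (tr : list (R * event * state)) (T : TxId) (rts : R) (n : nat) : Prop :=
  exists j k tj sj tk sk L,
    (j < k < n)%nat /\
    nth_error tr j = Some (tj, ETime T L rts, sj) /\ silent tr T (fun m => (m < j)%nat) /\
    nth_error tr k = Some (tk, EWake T, sk) /\ silent tr T (fun m => (j < m < k)%nat) /\
    tj <= rts <= tk.

Lemma rts_window_succ tr T rts n : rts_window tr T rts n -> rts_window tr T rts (S n).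
Proof.
  intros (j & k & tj & sj & tk & sk & L & Hjk & Hrest).
  exists j, k, tj, sj, tk, sk, L. split; [lia | exact Hrest].
Qed.

Definition phase_history (tr : list (R * event * state)) (n : nat) (T : TxId) (p : phase)
    : Prop :=
  match p with
  | Idle => silent tr T (fun m => (m < n)%nat)
  | SleepR L U g =>
      exists j sj, (j < n)%nat /\ nth_error tr j = Some (g, ETime T L U, sj) /\
        silent tr T (fun m => (m < j)%nat) /\ silent tr T (fun m => (j < m < n)%nat) /\
        L <= g <= U
  | Reading rts _ => rts_window tr T rts n
  | _ => True
  end.

Definition history_inv (tr : list (R * event * state)) (n : nat) (s : state) : Prop :=
  forall T, phase_history tr n T (ph s T).

Lemma phase_history_succ tr n T p :
  phase_history tr n T p -> silent tr T (fun m => m = n) -> phase_history tr (S n) T p.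
Proof.
  intros Hp Hn. destruct p; simpl in *; auto using rts_window_succ.
  - apply (silent_cover _ _ _ _ _ Hp Hn). lia.
  - destruct Hp as (j & sj & Hj & Hjth & Hbefore & Hbetween & Hg).
    exists j, sj. split; [lia|]. repeat split; try assumption; try lra.
    apply (silent_cover _ _ _ _ _ Hbetween Hn). lia.
Qed.

Lemma step_ph_other s t e s' T : step sys s t e s' -> T <> ev_tx e -> ph s' T = ph s T.
Proof.
  intros Hst HT. destruct Hst; simpl in *; destruct (Nat.eqb_spec T T0); congruence.
Qed.

Lemma wake_after_upper_bound m L U g t :
  drift_bounded sys -> L <= g -> g <= t ->
  clk sys m t - clk sys m g >= (U - L) * (1 + eps sys) -> U <= t.
Proof.
  intros [Heps Hclk] HLg Hgt Hsleep. specialize (Hclk m g t Hgt). nra.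
Qed.

Lemma history_inv_initial tr init : history_inv tr 0 (initial_state init).
Proof. intros T m t e s Hm. lia. Qed.

Lemma history_inv_step s0 l tr :
  drift_bounded sys -> exec sys s0 l tr ->
  forall i sb t e s, nth_error tr i = Some (t, e, s) ->
  history_inv tr i sb -> step sys sb t e s -> history_inv tr (S i) s.
Proof.
  intros Hd Hex i sb t e s Hi Hh Hst T.
  destruct (Nat.eq_dec T (ev_tx e)) as [->|HT].
  2: { rewrite (step_ph_other _ _ _ _ _ Hst HT).
       exact (phase_history_succ _ _ _ _ (Hh T) (silent_at _ _ _ _ _ _ Hi (not_eq_sym HT))). }
  destruct Hst as [s t T L U Hph HLU | s t T L U g Hph Hsleep | s t T rts o todo v Hph
                  | | | | | | | | | | | | | |];
    simpl; rewrite Nat.eqb_refl; simpl; auto.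
  - specialize (Hh T). rewrite Hph in Hh.
    exists i, (set_ph s T (SleepR L U t)). repeat split; auto; try lia; try lra.
    intros m t' e' s' Hm. lia.
  - specialize (Hh T). rewrite Hph in Hh.
    destruct Hh as (j & sj & Hj & Hjth & Hbefore & Hbetween & Hg).
    exists j, i, g, sj, t, (set_ph s T (Reading U (rset sys T))), L.
    repeat split; auto; try lia; try lra.
    apply (wake_after_upper_bound (mach sys T) L U g t Hd); try lra.
    apply Rlt_le, (exec_time_increasing _ _ _ _ _ _ _ _ _ _ _ Hex Hj Hjth Hi).
  - specialize (Hh T). rewrite Hph in Hh. exact (rts_window_succ _ _ _ _ Hh).
Qed.

Lemma step_read_phase sb t T o rts res s :
  step sys sb t (ERead T o rts res) s -> exists todo, ph sb T = Reading rts (o :: todo).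
Proof. intros Hst. inversion Hst; subst; eauto. Qed.

Lemma step_read_some sb t T o rts v s :
  step sys sb t (ERead T o rts (Some v)) s ->
  exists todo, s = set_ph sb T (Reading rts todo) /\
    locked sb o = false /\ In v (vers sb o) /\ vts v <= rts /\
    (forall v', In v' (vers sb o) -> vts v' <= rts -> vts v' <= vts v).
Proof. intros Hst. inversion Hst; subst. eexists; repeat split; eauto. Qed.

Lemma read_rts_window init tr i t T o rts res s :
  drift_bounded sys -> exec sys (initial_state init) None tr ->
  nth_error tr i = Some (t, ERead T o rts res, s) -> rts_window tr T rts i.
Proof.
  intros Hd Hex Hi.
  destruct (exec_nth_ind (history_inv tr) tr _ None Hex (history_inv_initial tr init)
              (history_inv_step _ _ tr Hd Hex) i t _ s Hi) as (sb & Hh & Hst & _).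
  destruct (step_read_phase _ _ _ _ _ _ _ Hst) as [todo Hph].
  specialize (Hh T). rewrite Hph in Hh. exact Hh.
Qed.

Lemma rts_window_before s0 l tr i t e s T rts :
  exec sys s0 l tr -> nth_error tr i = Some (t, e, s) -> rts_window tr T rts i -> rts < t.
Proof.
  intros Hex Hi (j & k & tj & sj & tk & sk & L & Hjk & _ & _ & Hk & _ & Hrts).
  assert (Hki : (k < i)%nat) by lia.
  pose proof (exec_time_increasing _ _ _ _ _ _ _ _ _ _ _ Hex Hki Hk Hi). lra.
Qed.

Definition latest_written (s0 : state) (tr : list (R * event * state)) (o : Obj) (r : R)
    (v : version) : Prop :=
  ever_version s0 tr o v /\ vts v <= r /\
  forall v', ever_version s0 tr o v' -> vts v' <= r -> vts v' <= vts v.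

Lemma read_is_latest s0 tr i t T o rts v s :
  lock_inv s0 -> exec sys s0 None tr ->
  nth_error tr i = Some (t, ERead T o rts (Some v), s) -> rts < t ->
  latest_written s0 tr o rts v.
Proof.
  intros Hinv0 Hex Hi Hrt.
  destruct (exec_nth_ind (fun _ => lock_inv) tr s0 None Hex Hinv0
              (fun _ _ _ _ _ _ Hinv Hst => lock_inv_step _ _ _ _ Hinv Hst) i t _ s Hi)
    as (sb & Hinv & Hst & Hinv_s).
  destruct (step_read_some _ _ _ _ _ _ _ Hst)
    as (todo & -> & Hunlocked & Hin & Hle & Hmax).
  set (s := set_ph sb T (Reading rts todo)) in *.
  assert (Hsnap : snapshot_inv o rts v s).
  { apply snapshot_inv_set_ph; [|exact I].
    split; [exact Hmax|]. intros W. exact (future_wts_above_unlocked _ _ _ W Hinv Hunlocked). }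
  split; [right; exists i, t, (ERead T o rts (Some v)), s; split; [exact Hi | exact Hin]|].
  split; [exact Hle|].
  intros v' [Hin0 | (m & tm & em & sm & Hm & Hinm)] Hle'.
  - apply (snapshot_max _ _ _ _ Hsnap); [|exact Hle'].
    exact (exec_vers_incl _ _ _ _ _ _ _ o Hex Hi v' Hin0).
  - destruct (Nat.le_gt_cases m i) as [Hmi|Him].
    + apply (snapshot_max _ _ _ _ Hsnap); [|exact Hle'].
      exact (exec_vers_incl_nth _ _ _ _ _ _ _ _ _ _ _ o Hex Hmi Hm Hi v' Hinm).
    + refine (snapshot_max _ _ _ _ _ v' Hinm Hle').
      exact (exec_snapshot_inv _ _ _ _ _ _ _ _ _ _ Hinv_s Hsnap (Rlt_le _ _ Hrt)
               (exec_skipn _ _ _ _ _ _ _ Hex Hi) (nth_error_skipn_lt _ _ _ _ Him Hm)).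
Qed.

End Execution.

Theorem lemma4 (S : system) (init : Obj -> list version)
    (tr : list (R * event * state)) :
  drift_bounded S ->
  exec S (initial_state init) None tr ->
  forall i t T o rts v s,
    nth_error tr i = Some (t, ERead T o rts (Some v), s) ->
    (* the read version is the latest version of o ever written with ts <= rts *)
    (ever_version (initial_state init) tr o v /\ vts v <= rts /\
     forall v', ever_version (initial_state init) tr o v' -> vts v' <= rts ->
       vts v' <= vts v) /\
    (* rts lies between the start of T and the end of its rts acquisition *)
    (exists j k tj sj tk sk L,
       (j < k < i)%nat /\
       nth_error tr j = Some (tj, ETime T L rts, sj) /\
       (forall j' t' e' s', (j' < j)%nat -> nth_error tr j' = Some (t', e', s') ->
          ev_tx e' <> T) /\
       nth_error tr k = Some (tk, EWake T, sk) /\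
       (forall k' t' e' s', (j < k' < k)%nat -> nth_error tr k' = Some (t', e', s') ->
          ev_tx e' <> T) /\
       tj <= rts <= tk).
Proof.
  intros Hd Hex i t T o rts v s Hi.
  pose proof (read_rts_window S init tr i t T o rts (Some v) s Hd Hex Hi) as Hwin.
  split; [|exact Hwin].
  apply (read_is_latest S _ _ i t T o rts v s (lock_inv_initial S init) Hex Hi).
  exact (rts_window_before S _ _ _ _ _ _ _ _ _ Hex Hi Hwin).
Qed.
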